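(* In the setting of $n=2^q$ identical fermions injected in the input state $(1+nc,\dots,n+nc)$ ($0\le c\le 2^k-1$) of the Sylvester interferometer $\frac{1}{\sqrt m}H(m)$ with $m=2^{k+q}$, the number of non-suppressed output states is exactly $(m/n)^n=2^{kn}$, out of $\binom{m+n-1}{n}$ possible $n$-particle output states.
   Context: For $m=2^p$, the Sylvester matrix $H(m)$ is defined recursively by $H(1)=[1]$ and $H(2^p)=\begin{bmatrix}H(2^{p-1})&H(2^{p-1})\\ H(2^{p-1})&-H(2^{p-1})\end{bmatrix}$, rows and columns indexed $1,\dots,m$. An $n$-particle output state on $m$ modes is a nondecreasing tuple $\vec t=(t_1\le\dots\le t_n)$ with $t_i\in\{1,\dots,m\}$; $\mu_k(\vec t)=|\{i:t_i=k\}|$. For input $\vec s$ and output $\vec t$, the scattering matrix is $S_{i,j}=U_{t_i,s_j}$ with $U=\frac{1}{\sqrt m}H(m)$, and the fermionic amplitude is $\det S/\sqrt{\prod_k\mu_k(\vec s)!\prod_k\mu_k(\vec t)!}$. An output state is suppressed if its amplitude is zero. *)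

(* Modes are 0-indexed: mode j (1..m in the paper) is the ordinal j-1 : 'I_m. *)
From HB Require Import structures.
From mathcomp Require Import all_boot all_order all_algebra all_field.
Set Implicit Arguments. Unset Strict Implicit. Unset Printing Implicit Defensive.
Import Order.TTheory GRing.Theory Num.Theory.

(* Entries (0-indexed) of the Sylvester matrix H(2^p), following the recursive
   block definition H(2^(p+1)) = [[H, H], [H, -H]] with H = H(2^p). *)
Fixpoint sylv (p : nat) (i j : nat) : int :=
  match p with
  | 0 => 1%R
  | p'.+1 =>
      let h := 2 ^ p' in
      if i < h then (if j < h then sylv p' i j else sylv p' i (j - h))
      else (if j < h then sylv p' (i - h) j else (- sylv p' (i - h) (j - h))%R)
  end.

Definition sylvester (p : nat) : 'M[int]_(2 ^ p) := \matrix_(i, j) sylv p i j.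

Local Open Scope ring_scope.

Definition sylvU (p : nat) : 'M[algC]_(2 ^ p) :=
  (sqrtC (2 ^ p)%:R)^-1 *: \matrix_(i, j) ((sylvester p i j)%:~R : algC).

Definition output_state (p n : nat) (t : n.-tuple 'I_(2 ^ p)) : bool :=
  sorted (fun a b : 'I_(2 ^ p) => (a <= b)%N) t.

Definition occ (p n : nat) (t : n.-tuple 'I_(2 ^ p)) (k : 'I_(2 ^ p)) : nat :=
  count_mem k t.

Definition scattering (p n : nat) (s t : n.-tuple 'I_(2 ^ p)) : 'M[algC]_n :=
  \matrix_(i, j) sylvU p (tnth t i) (tnth s j).

Definition fermion_amplitude (p n : nat) (s t : n.-tuple 'I_(2 ^ p)) : algC :=
  \det (scattering s t) /
    sqrtC (((\prod_(k : 'I_(2 ^ p)) (occ s k)`!) * (\prod_(k : 'I_(2 ^ p)) (occ t k)`!))%N%:R).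

Definition suppressed (p n : nat) (s t : n.-tuple 'I_(2 ^ p)) : bool :=
  fermion_amplitude s t == 0.

Lemma pow2_gt0 (p : nat) : (0 < 2 ^ p)%N.
Proof. by rewrite expn_gt0. Qed.

(* Input state (1+nc, ..., n+nc) with n = 2^q on m = 2^(k+q) modes, 0-indexed as
   (nc, ..., nc + n - 1).  The insubd default is never used when c < 2^k. *)
Definition input_state (q k c : nat) : (2 ^ q).-tuple 'I_(2 ^ (k + q)) :=
  [tuple insubd (Ordinal (pow2_gt0 (k + q))) (2 ^ q * c + i)%N | i < 2 ^ q].

(* The Sylvester matrix H(2^(k+q)) is the Kronecker product H(2^k) (x) H(2^q).
   The input modes nc, ..., nc + n - 1 fill one block of columns, so the
   scattering matrix is a nonsingular diagonal matrix times the matrix made of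
   the rows [t_i mod n] of H(n).  Since H(n) H(n)^T = n I, that matrix is
   singular exactly when two output modes share a residue mod n.  A
   nondecreasing output whose residues are pairwise distinct is the sorted list
   of the g(r) * n + r for a unique function g from residues to quotients
   (g(r) < m/n), so there are (m/n)^n of them. *)

From mathcomp Require Import all_boot all_order all_algebra all_field.
Set Implicit Arguments. Unset Strict Implicit. Unset Printing Implicit Defensive.
Import Order.TTheory GRing.Theory Num.Theory.

Lemma ltn_mul_add2r a b M N : b < N -> (a * N + b < M * N) = (a < M).
Proof.
move=> bN; have N_gt0 : 0 < N by apply: leq_ltn_trans bN.
by rewrite -ltn_divLR // divnMDl // divn_small // addn0.
Qed.

Lemma eqn_mul_add2r a b a' b' N : b < N -> b' < N ->
  (a * N + b == a' * N + b') = (a == a') && (b == b').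
Proof.
move=> bN b'N; have N_gt0 : 0 < N by apply: leq_ltn_trans bN.
apply/eqP/andP => [E | [/eqP-> /eqP->] //]; split; apply/eqP.
  by have := congr1 (divn^~ N) E; rewrite !divnMDl // !divn_small // !addn0.
by have := congr1 (modn^~ N) E; rewrite !modnMDl !modn_small.
Qed.

Lemma subn_mul_add2r a b M N : M <= a -> a * N + b - M * N = (a - M) * N + b.
Proof. by move=> Ma; rewrite mulnBl addnBAC // leq_mul2r Ma orbT. Qed.

Lemma big_nat_mul (R : Type) (idx : R) (op : Monoid.law idx) K N (F : nat -> R) :
  \big[op/idx]_(0 <= i < K * N) F i =
  \big[op/idx]_(0 <= a < K) \big[op/idx]_(0 <= b < N) F (a * N + b).
Proof.
elim: K => [|K IH]; first by rewrite !big_geq.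
rewrite mulSnr big_nat_recr //= -IH (big_cat_nat (leq0n _) (leq_addr N _)) /=.
congr (op _ _); rewrite -{1}[K * N]add0n big_addn addKn.
by apply: eq_bigr => b _; rewrite addnC.
Qed.

Lemma sylv_kron k q a b c d : a < 2 ^ k -> c < 2 ^ k -> b < 2 ^ q -> d < 2 ^ q ->
  sylv (k + q) (a * 2 ^ q + b) (c * 2 ^ q + d) = (sylv k a c * sylv q b d)%R.
Proof.
move=> + + bq dq; elim: k a c => [|k IH] a c.
  by rewrite expn0 !ltnS !leqn0 => /eqP-> /eqP->; rewrite mul1r.
rewrite expnS mul2n -addnn => ha hc; rewrite addSn /= expnD !ltn_mul_add2r //.
have lt_sub x : 2 ^ k <= x -> x < 2 ^ k + 2 ^ k -> x - 2 ^ k < 2 ^ k.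
  by move=> kx hx; rewrite ltn_subLR.
by case: ltnP => ha'; case: ltnP => hc'; rewrite ?subn_mul_add2r // IH ?lt_sub ?mulNr.
Qed.

Local Open Scope ring_scope.

Lemma sylv_neq0 p i j : sylv p i j != 0.
Proof. by elim: p i j => [|p IH] i j //=; case: ifP; case: ifP; rewrite ?oppr_eq0 IH. Qed.

Definition sylv_orthogonal p := forall a b, (a < 2 ^ p)%N -> (b < 2 ^ p)%N ->
  \sum_(0 <= j < 2 ^ p) sylv p a j * sylv p b j = ((a == b) * 2 ^ p)%N%:R.

Lemma sylv_orthogonal0 : sylv_orthogonal 0.
Proof. by move=> [|a] [|b] // _ _; rewrite big_nat1. Qed.

Lemma sylv_orthogonal1 : sylv_orthogonal 1.
Proof. by move=> [|[|a]] [|[|b]] // _ _; rewrite !big_nat_recr //= big_geq. Qed.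

Lemma sylv_orthogonalD k q :
  sylv_orthogonal k -> sylv_orthogonal q -> sylv_orthogonal (k + q).
Proof.
move=> ortk ortq x y hx hy; have q_gt0 := pow2_gt0 q.
have hdiv z : (z < 2 ^ (k + q))%N -> (z %/ 2 ^ q < 2 ^ k)%N.
  by move=> hz; rewrite ltn_divLR // -expnD.
rewrite (divn_eq x (2 ^ q)) (divn_eq y (2 ^ q)) eqn_mul_add2r ?ltn_pmod //.
rewrite expnD big_nat_mul.
under eq_big_nat => c /andP[_ hc] do under eq_big_nat => d /andP[_ hd] do
  rewrite !sylv_kron ?hdiv ?ltn_pmod // mulrACA.
rewrite -big_distrlr /= ortk ?hdiv // ortq ?ltn_pmod //.
by rewrite -natrM mulnACA mulnb.
Qed.

Lemma all_sylv_orthogonal p : sylv_orthogonal p.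
Proof.
elim: p => [|p IH]; first exact: sylv_orthogonal0.
by rewrite -add1n; apply: sylv_orthogonalD sylv_orthogonal1 IH.
Qed.

Lemma sylvester_mul_tr p : sylvester p *m (sylvester p)^T = (2 ^ p)%:R%:M.
Proof.
apply/matrixP => i j; rewrite !mxE; under eq_bigr do rewrite !mxE.
rewrite -(big_mkord xpredT (fun l => sylv p i l * sylv p j l)) all_sylv_orthogonal //.
by rewrite natrM mulr_natl.
Qed.

Lemma det_rowsub_orthogonal (R : idomainType) n (A : 'M[R]_n) a (r : 'I_n -> 'I_n) :
  A *m A^T = a%:M -> a != 0 -> (\det (rowsub r A) != 0) = injectiveb r.
Proof.
move=> AAt a_neq0.
have [/injectiveP r_inj|/injectivePn [i [j ij rij]]] := boolP (injectiveb r).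
  have : rowsub r A *m (rowsub r A)^T = a%:M.
    apply/matrixP => i j; have := congr1 (fun M : 'M_n => M (r i) (r j)) AAt.
    rewrite !mxE (inj_eq r_inj) => <-.
    by apply: eq_bigr => l _; rewrite !mxE.
  move/(congr1 determinant); rewrite det_mulmx det_tr det_scalar => det2.
  apply/eqP => det0; move: det2; rewrite det0 mul0r => /esym/eqP.
  by rewrite expf_eq0 (negbTE a_neq0) andbF.
by rewrite (determinant_alternate ij) ?eqxx // => l; rewrite !mxE rij.
Qed.

Lemma det_rowsub_sylvester p (r : 'I_(2 ^ p) -> 'I_(2 ^ p)) :
  (\det (rowsub r (sylvester p)) != 0) = injectiveb r.
Proof.
by rewrite (det_rowsub_orthogonal _ (sylvester_mul_tr p)) // pnatr_eq0 expn_eq0.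
Qed.

Lemma uniq_map_tuple (T : Type) (U : eqType) n (t : n.-tuple T) (f : T -> U) :
  uniq (map f t) = injectiveb (fun i => f (tnth t i)).
Proof.
apply/(tuple_uniqP (map_tuple f t))/injectiveP => inj i j.
  by move=> e; apply: inj; rewrite !tnth_map.
by rewrite !tnth_map => /inj.
Qed.

Lemma suppressedE p n (s t : n.-tuple 'I_(2 ^ p)) :
  suppressed s t = (\det (scattering s t) == 0).
Proof.
have prod_fact_eq0 (u : n.-tuple 'I_(2 ^ p)) : (\prod_k (occ u k)`! == 0)%N = false.
  by apply/negbTE; rewrite -lt0n prodn_gt0 // => k; apply: fact_gt0.
rewrite /suppressed /fermion_amplitude mulf_eq0 invr_eq0 sqrtC_eq0 pnatr_eq0.
by rewrite muln_eq0 !prod_fact_eq0 !orbF.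
Qed.

Definition residue_pow2 q (x : nat) : 'I_(2 ^ q) := Ordinal (ltn_pmod x (pow2_gt0 q)).

Lemma input_stateE q k c j : (c < 2 ^ k)%N ->
  val (tnth (input_state q k c) j) = (c * 2 ^ q + j)%N.
Proof.
move=> hc; rewrite tnth_mktuple val_insubd mulnC ifT //.
by rewrite expnD ltn_mul_add2r.
Qed.

Lemma scattering_input_state q k c (t : (2 ^ q).-tuple 'I_(2 ^ (k + q))) :
  (c < 2 ^ k)%N ->
  scattering (input_state q k c) t =
  diag_mx (\row_i ((sqrtC (2 ^ (k + q))%:R)^-1 * (sylv k (tnth t i %/ 2 ^ q) c)%:~R))
  *m map_mx intr (rowsub (fun i => residue_pow2 q (tnth t i)) (sylvester q)).
Proof.
move=> hc; apply/matrixP => i j; rewrite mul_diag_mx !mxE input_stateE //.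
rewrite {1}(divn_eq (tnth t i) (2 ^ q)) sylv_kron ?ltn_pmod ?pow2_gt0 //.
  by rewrite intrM mulrA.
by rewrite ltn_divLR ?pow2_gt0 // -expnD.
Qed.

Lemma nonsuppressed_input_state q k c (t : (2 ^ q).-tuple 'I_(2 ^ (k + q))) :
  (c < 2 ^ k)%N ->
  ~~ suppressed (input_state q k c) t =
  uniq [seq (x %% 2 ^ q)%N | x : 'I_(2 ^ (k + q)) <- t].
Proof.
move=> hc; rewrite suppressedE scattering_input_state // det_mulmx det_diag.
rewrite mulf_eq0 negb_or det_map_mx intr_eq0 det_rowsub_sylvester.
rewrite (introT (prodf_neq0 _ _)) => [|i _]; last first.
  rewrite mxE mulf_neq0 ?intr_eq0 ?sylv_neq0 //.
  by rewrite invr_eq0 sqrtC_eq0 pnatr_eq0 expn_eq0.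
by rewrite -(uniq_map_tuple t (residue_pow2 q)) -(map_inj_uniq val_inj) -map_comp.
Qed.

Local Close Scope ring_scope.

Section SortedTransversals.

Variables n K m : nat.
Hypothesis m_eq : m = K * n.

Lemma transversal_elt_subproof (g : {ffun 'I_n -> 'I_K}) (r : 'I_n) : g r * n + r < m.
Proof. by rewrite m_eq ltn_mul_add2r. Qed.

Definition transversal_elt g r : 'I_m := Ordinal (transversal_elt_subproof g r).

Definition transversal_tuple g : n.-tuple 'I_m :=
  sort_tuple <=%O (map_tuple (transversal_elt g) (ord_tuple n)).

Lemma transversal_elt_mod g r : transversal_elt g r %% n = r.
Proof. by rewrite /= modnMDl modn_small. Qed.

Lemma transversal_elt_div g r : transversal_elt g r %/ n = g r.
Proof.
have n_gt0 : 0 < n by apply: leq_ltn_trans (ltn_ord r).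
by rewrite /= divnMDl // divn_small // addn0.
Qed.

Lemma mem_transversal_tuple g x :
  (x \in transversal_tuple g) = (x \in map (transversal_elt g) (enum 'I_n)).
Proof. by rewrite mem_sort /= enumT unlock. Qed.

Lemma transversal_tuple_inj : injective transversal_tuple.
Proof.
move=> g1 g2 eq_g; apply/ffunP => r.
have : transversal_elt g1 r \in transversal_tuple g2.
  by rewrite -eq_g mem_transversal_tuple map_f ?mem_enum.
rewrite mem_transversal_tuple => /mapP [r' _ e].
have rr' : r = r'.
  by apply: ord_inj; rewrite -(transversal_elt_mod g1 r) e transversal_elt_mod.
by apply: ord_inj; rewrite -(transversal_elt_div g1 r) e rr' transversal_elt_div.
Qed.

Lemma transversal_tuple_sorted_uniq g :
  sorted <=%O (transversal_tuple g) && uniq [seq x %% n | x : 'I_m <- transversal_tuple g].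
Proof.
rewrite sort_le_sorted (perm_uniq (perm_map _ (introT permPl (perm_sort _ _)))) /=.
rewrite -map_comp (eq_map (transversal_elt_mod g)) map_inj_uniq ?enum_uniq //.
exact: ord_inj.
Qed.

Hypothesis n_gt0 : 0 < n.

Lemma sorted_uniq_transversal_tuple (t : n.-tuple 'I_m) :
  sorted <=%O t -> uniq [seq x %% n | x : 'I_m <- t] -> exists g, t = transversal_tuple g.
Proof.
move=> t_sorted t_uniq.
pose res i : 'I_n := Ordinal (ltn_pmod (tnth t i) n_gt0).
have res_inj : injective res.
  move: t_uniq; rewrite uniq_map_tuple => /injectiveP res_inj i j /(congr1 val).
  exact: res_inj.
pose pos := invF res_inj.
have quo_lt r : tnth t (pos r) %/ n < K by rewrite ltn_divLR // -m_eq.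
pose g := [ffun r => Ordinal (quo_lt r)].
have eltE r : transversal_elt g r = tnth t (pos r).
  apply: ord_inj; rewrite /= ffunE /=.
  by rewrite -[in X in _ + X](f_invF res_inj r) /= -divn_eq.
exists g; apply: val_inj; apply: le_sorted_eq; rewrite ?sort_le_sorted //.
have /andP[_ /map_uniq g_uniq] := transversal_tuple_sorted_uniq g.
apply: uniq_perm (map_uniq t_uniq) g_uniq _ => x.
rewrite mem_transversal_tuple; apply/idP/mapP => [/tnthP[i ->]|[r _ ->]].
  by exists (res i); rewrite ?mem_enum // eltE /pos invF_f.
by rewrite eltE mem_tnth.
Qed.

Lemma card_sorted_transversals :
  #|[set t : n.-tuple 'I_m | sorted <=%O t && uniq [seq x %% n | x : 'I_m <- t]]| = K ^ n.
Proof.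
rewrite -[K]card_ord -[X in _ ^ X]card_ord -card_ffun -cardsT.
rewrite -(card_imset _ transversal_tuple_inj); apply: eq_card => t.
rewrite inE; apply/idP/imsetP => [/andP[t_sorted t_uniq]|[g _ ->]].
  by have [g ->] := sorted_uniq_transversal_tuple t_sorted t_uniq; exists g; rewrite ?inE.
exact: transversal_tuple_sorted_uniq.
Qed.

End SortedTransversals.

Lemma card_sorted_ord_tuples n N : 0 < N ->
  #|[set t : n.-tuple 'I_N | sorted <=%O t]| = 'C(N + n - 1, n).
Proof.
case: N => // N _; rewrite addSn subn1 /= addnC -(card_sorted_tuples n N).
by apply: eq_card => t; rewrite !inE sorted_map.
Qed.

Theorem mainTheorem13 (q k c : nat) :
  (c < 2 ^ k)%N ->
  #|[set t : (2 ^ q).-tuple 'I_(2 ^ (k + q)) |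
       output_state t && ~~ suppressed (input_state q k c) t]|
    = (2 ^ (k + q) %/ 2 ^ q) ^ (2 ^ q)
  /\ (2 ^ (k + q) %/ 2 ^ q) ^ (2 ^ q) = 2 ^ (k * 2 ^ q)
  /\ #|[set t : (2 ^ q).-tuple 'I_(2 ^ (k + q)) | output_state t]|
       = 'C(2 ^ (k + q) + 2 ^ q - 1, 2 ^ q).
Proof.
move=> hc; have m_eq : 2 ^ (k + q) = 2 ^ k * 2 ^ q by rewrite expnD.
have -> : 2 ^ (k + q) %/ 2 ^ q = 2 ^ k by rewrite m_eq mulnK ?pow2_gt0.
split; [|split].
- rewrite -(card_sorted_transversals m_eq (pow2_gt0 q)); apply: eq_card => t.
  by rewrite !inE nonsuppressed_input_state.
- by rewrite -expnM.
- exact: card_sorted_ord_tuples (pow2_gt0 _).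
Qed.
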